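(* Let $a$ be a smooth, positive, increasing function on $(0,\infty)$ and consider the two-dimensional Robertson–Walker spacetime $ds^2=-dt^2+a^2(t)\,d\chi^2$ with comoving worldlines $\beta_0:\chi=0$, $\beta_1:\chi=\chi_1$, $\beta_2:\chi=\chi_2$. Let $v_s$ denote one of the four geometric relative velocities (Fermi, kinematic, spectroscopic, astrometric), and suppose there is an injective function $f$ such that for every comoving observer $\beta_j$ ($\chi=\chi_j$), every proper time $\tau$ of $\beta_j$ and every comoving particle with coordinate $\chi$ (in the range where $v_s$ is defined), the geometric velocity of the particle relative to $\beta_j$ at proper time $\tau$ equals $f(v)$, where $v=\dot a(\tau)(\chi-\chi_j)$ is the Hubble velocity. Let $v_{s1}$ be the geometric velocity of $\beta_1$ relative to $\beta_0$ at proper time $\tau_0^-$ of $\beta_0$, $v_{s2}$ the geometric velocity of $\beta_2$ relative to $\beta_1$ at proper time $\tau_1$ of $\beta_1$, and $v_{s3}$ the geometric velocity of $\beta_2$ relative to $\beta_0$ at proper time $\tau_0^+$ of $\beta_0$ (possibly $\tau_0^-=\tau_0^+$). Then, provided $\dot a(\tau_0^-)\ne0$ and $\dot a(\tau_1)\neq0$, $$v_{s3}=f\!\left(\frac{\dot a(\tau_0^+)}{\dot a(\tau_0^-)}f^{-1}(v_{s1})+\frac{\dot a(\tau_0^+)}{\dot a(\tau_1)}f^{-1}(v_{s2})\right).$$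
   Context: Comoving worldlines $\chi=\text{const}$ are parametrized by $t$, their proper time. The Hubble velocity of a comoving particle with coordinate $\chi$ relative to the comoving observer at $\chi_j$ at cosmological time $\tau$ is $\dot a(\tau)(\chi-\chi_j)$ (rate of change of proper distance on the slice $t=\tau$). The geometric relative velocities are the scalar components (along $a^{-1}\partial_\chi$) of the Fermi, kinematic, spectroscopic and astrometric relative velocities of the particle with respect to the observer at its proper time $\tau$. *)

From Stdlib Require Import Reals.
From Coquelicot Require Import Coquelicot.
Open Scope R_scope.

Definition smooth_pos (a : R -> R) : Prop :=
  forall (n : nat) (t : R), 0 < t -> ex_derive_n a n t.

Definition positive_on_pos (a : R -> R) : Prop := forall t, 0 < t -> 0 < a t.

Definition increasing_on_pos (a : R -> R) : Prop :=
  forall s t, 0 < s -> s <= t -> a s <= a t.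

Definition hubble_velocity (a : R -> R) (chij tau chi : R) : R :=
  Derive a tau * (chi - chij).

From Stdlib Require Import Reals.
From Coquelicot Require Import Coquelicot.
Open Scope R_scope.

(* Once each velocity is rewritten as f of a Hubble velocity, the claim lives
   entirely in the Hubble velocities, which are linear in the comoving
   separation: separations add along the three worldlines, and changing the
   cosmological time only rescales by the ratio of the values of a'. *)

Lemma hubble_velocity_rescale (a : R -> R) (chij tau tau' chi : R) :
  Derive a tau <> 0 ->
  hubble_velocity a chij tau' chi
  = Derive a tau' / Derive a tau * hubble_velocity a chij tau chi.
Proof. intros Hda. unfold hubble_velocity. field. exact Hda. Qed.

Lemma hubble_velocity_chain (a : R -> R) (chi0 chi1 chi2 tau : R) :
  hubble_velocity a chi0 tau chi2
  = hubble_velocity a chi0 tau chi1 + hubble_velocity a chi1 tau chi2.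
Proof. unfold hubble_velocity. ring. Qed.

(* vs chij tau chi : geometric relative velocity (one of Fermi / kinematic /
   spectroscopic / astrometric) of the comoving particle chi relative to the
   comoving observer chi = chij at its proper time tau; it is defined when
   D chij tau chi holds.  g is the inverse of f on its range. *)
Theorem theorem5
  (a : R -> R) (Ha_smooth : smooth_pos a) (Ha_pos : positive_on_pos a)
  (Ha_incr : increasing_on_pos a)
  (chi1 chi2 : R)
  (D : R -> R -> R -> Prop) (vs : R -> R -> R -> R)
  (f g : R -> R) (Hf_inj : forall x y, f x = f y -> x = y)
  (Hg : forall x, g (f x) = x)
  (Hhubble : forall chij, (chij = 0 \/ chij = chi1 \/ chij = chi2) ->
     forall tau chi, 0 < tau -> D chij tau chi ->
       vs chij tau chi = f (hubble_velocity a chij tau chi))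
  (tau0m tau0p tau1 : R) (H0m : 0 < tau0m) (H0p : 0 < tau0p) (H1 : 0 < tau1)
  (HD1 : D 0 tau0m chi1) (HD2 : D chi1 tau1 chi2) (HD3 : D 0 tau0p chi2)
  (Hda0 : Derive a tau0m <> 0) (Hda1 : Derive a tau1 <> 0) :
  let vs1 := vs 0 tau0m chi1 in
  let vs2 := vs chi1 tau1 chi2 in
  let vs3 := vs 0 tau0p chi2 in
  vs3 = f (Derive a tau0p / Derive a tau0m * g vs1
           + Derive a tau0p / Derive a tau1 * g vs2).
Proof.
  intros vs1 vs2 vs3; unfold vs1, vs2, vs3.
  rewrite (Hhubble 0 (or_introl eq_refl) tau0m chi1 H0m HD1).
  rewrite (Hhubble chi1 (or_intror (or_introl eq_refl)) tau1 chi2 H1 HD2).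
  rewrite (Hhubble 0 (or_introl eq_refl) tau0p chi2 H0p HD3).
  rewrite !Hg, <- !hubble_velocity_rescale by assumption.
  now rewrite <- hubble_velocity_chain.
Qed.
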